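(* Let $A$ be a partially symmetric 0-dialgebra. On $A\oplus A$ define $(a,b)\dashv(c,d)=(a\dashv c-d\vdash b^\ast,\; a^\ast\dashv d+c\vdash b)$, $(a,b)\vdash(c,d)=(a\vdash c-d\dashv b^\ast,\; a^\ast\vdash d+c\dashv b)$ and $(a,b)^\ast=(a^\ast,-b)$. Then $A\oplus A$ with these operations is a partially symmetric 0-dialgebra.
   Context: A 0-dialgebra with involution is a vector space with bilinear operations $\dashv,\vdash$ satisfying $a\dashv(b\dashv c)=a\dashv(b\vdash c)$ and $(a\dashv b)\vdash c=(a\vdash b)\vdash c$, together with a linear map $\ast$ with $(a^\ast)^\ast=a$, $(a\dashv b)^\ast=b^\ast\vdash a^\ast$, $(a\vdash b)^\ast=b^\ast\dashv a^\ast$. Write $\mathrm{sym}(x)=x+x^\ast$ and $\{x,y\}=x\dashv y-y\vdash x$. Such a structure is partially symmetric if $\{\mathrm{sym}(x),y\}=0$ and $\{x,\mathrm{sym}(y)\}=0$ for all $x,y$. *)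

From mathcomp Require Import all_boot all_algebra.
Set Implicit Arguments. Unset Strict Implicit. Unset Printing Implicit Defensive.
Import GRing.Theory.
Local Open Scope ring_scope.

Definition bilinear_op (K : fieldType) (V : lmodType K) (op : V -> V -> V) : Prop :=
  (forall (k : K) (x y z : V), op (k *: x + y) z = k *: op x z + op y z) /\
  (forall (k : K) (x y z : V), op x (k *: y + z) = k *: op x y + op x z).

Definition linear_map (K : fieldType) (V : lmodType K) (f : V -> V) : Prop :=
  forall (k : K) (x y : V), f (k *: x + y) = k *: f x + f y.

(* 0-dialgebra with involution: (V, dashv = l, vdash = r, ast = s). *)
Definition zero_dialg_inv (K : fieldType) (V : lmodType K)
    (l r : V -> V -> V) (s : V -> V) : Prop :=
  [/\ bilinear_op l, bilinear_op r & linear_map s] /\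
  [/\ (forall a b c : V, l a (l b c) = l a (r b c)),
      (forall a b c : V, r (l a b) c = r (r a b) c) &
      (forall a : V, s (s a) = a)] /\
  (forall a b : V, s (l a b) = r (s b) (s a)) /\
  (forall a b : V, s (r a b) = l (s b) (s a)).

Definition symz (K : fieldType) (V : lmodType K) (s : V -> V) (x : V) : V := x + s x.

Definition dbrack (K : fieldType) (V : lmodType K) (l r : V -> V -> V) (x y : V) : V :=
  l x y - r y x.

Definition partially_symmetric (K : fieldType) (V : lmodType K)
    (l r : V -> V -> V) (s : V -> V) : Prop :=
  [/\ zero_dialg_inv l r s,
      (forall x y : V, dbrack l r (symz s x) y = 0) &
      (forall x y : V, dbrack l r x (symz s y) = 0)].

Definition dbl_l (K : fieldType) (V : lmodType K) (l r : V -> V -> V) (s : V -> V)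
    (p q : V * V) : V * V :=
  (l p.1 q.1 - r q.2 (s p.2), l (s p.1) q.2 + r q.1 p.2).

Definition dbl_r (K : fieldType) (V : lmodType K) (l r : V -> V -> V) (s : V -> V)
    (p q : V * V) : V * V :=
  (r p.1 q.1 - l q.2 (s p.2), r (s p.1) q.2 + l q.1 p.2).

Definition dbl_s (K : fieldType) (V : lmodType K) (s : V -> V) (p : V * V) : V * V :=
  (s p.1, - p.2).

(* For partial symmetry, note that
   sym(a, b) = (sym a, 0) and that sym a is fixed by the involution; hence
   {sym(a, b), (c, d)} = ({sym a, c}, (sym a)* ⊣ d - sym a ⊣ d) = 0 and
   {(a, b), sym(c, d)} = ({a, sym c}, sym c ⊢ b - (sym c)* ⊢ b) = 0. *)
From HB Require Import structures.
From mathcomp Require Import all_boot all_algebra.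
Import GRing.Theory.
Local Open Scope ring_scope.
Set Implicit Arguments. Unset Strict Implicit.

Lemma bilinear_op_bilinear_for (K : fieldType) (V : lmodType K) (f : V -> V -> V) :
  bilinear_op f -> bilinear_for *:%R *:%R f.
Proof. by case=> fl fr; split=> [y k x z | x k y z]; [exact: fl | exact: fr]. Qed.

Section Doubling.
Variables (K : fieldType) (V : lmodType K) (l r : V -> V -> V) (s : V -> V).
Hypotheses (Bl : bilinear_op l) (Br : bilinear_op r) (Ls : linear_map s).

HB.instance Definition _ :=
  bilinear_isBilinear.Build K V V V *:%R *:%R l (bilinear_op_bilinear_for Bl).
HB.instance Definition _ :=
  bilinear_isBilinear.Build K V V V *:%R *:%R r (bilinear_op_bilinear_for Br).
HB.instance Definition _ := GRing.isLinear.Build K V V *:%R s Ls.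

Hypotheses (l_lr : forall a b c, l a (l b c) = l a (r b c))
  (r_lr : forall a b c, r (l a b) c = r (r a b) c)
  (sK : involutive s)
  (s_l : forall a b, s (l a b) = r (s b) (s a))
  (s_r : forall a b, s (r a b) = l (s b) (s a))
  (dbrack_symzl : forall x y, dbrack l r (symz s x) y = 0)
  (dbrack_symzr : forall x y, dbrack l r x (symz s y) = 0).

Local Notation dl := (dbl_l l r s).
Local Notation dr := (dbl_r l r s).
Local Notation ds := (dbl_s s).

Lemma dbl_l_bilinear : @bilinear_op K (V * V)%type dl.
Proof.
by split=> k [a b] [c d] [e f]; congr pair;
  rewrite /= ?(linearPl, linearPr, linearP) scalerDr; apply: addrACA.
Qed.

Lemma dbl_r_bilinear : @bilinear_op K (V * V)%type dr.
Proof.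
by split=> k [a b] [c d] [e f]; congr pair;
  rewrite /= ?(linearPl, linearPr, linearP) scalerDr; apply: addrACA.
Qed.

Lemma dbl_s_linear : @linear_map K (V * V)%type ds.
Proof. by move=> k [a b] [c d]; congr pair; rewrite /= ?linearP // scalerN opprD. Qed.

Lemma dbl_l_lr (p q u : V * V) : dl p (dl q u) = dl p (dr q u).
Proof.
by case: p q u => [a b] [c d] [e f]; congr pair;
  rewrite /= ?(linearBr, linearDr, linearBl, linearDl) /= ?l_lr ?r_lr.
Qed.

Lemma dbl_r_lr (p q u : V * V) : dr (dl p q) u = dr (dr p q) u.
Proof.
by case: p q u => [a b] [c d] [e f]; congr pair;
  rewrite /= ?(linearB, linearD, linearBr, linearDr, linearBl, linearDl) /=
    ?s_l ?s_r ?sK ?l_lr ?r_lr.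
Qed.

Lemma dbl_sK : involutive ds.
Proof. by case=> a b; rewrite /dbl_s /= sK opprK. Qed.

(* [linearN] is restricted to [s]: the opposite map is itself linear, so an
   unrestricted [?linearN] never terminates. *)
Lemma dbl_s_l (p q : V * V) : ds (dl p q) = dr (ds q) (ds p).
Proof.
by case: p q => [a b] [c d]; congr pair;
  rewrite /= ?[s (- _)]linearN ?(linearB, linearD, linearNl, linearNr) /=
    ?s_l ?s_r ?sK ?opprK // addrC.
Qed.

Lemma dbl_s_r (p q : V * V) : ds (dr p q) = dl (ds q) (ds p).
Proof.
by case: p q => [a b] [c d]; congr pair;
  rewrite /= ?[s (- _)]linearN ?(linearB, linearD, linearNl, linearNr) /=
    ?s_l ?s_r ?sK ?opprK // addrC.
Qed.

Lemma dbl_zero_dialg_inv : @zero_dialg_inv K (V * V)%type dl dr ds.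
Proof.
split; first by split; [exact: dbl_l_bilinear | exact: dbl_r_bilinear
                        | exact: dbl_s_linear].
split; first by split; [exact: dbl_l_lr | exact: dbl_r_lr | exact: dbl_sK].
by split; [exact: dbl_s_l | exact: dbl_s_r].
Qed.

Lemma s_symz (x : V) : s (symz s x) = symz s x.
Proof. by rewrite /symz linearD /= sK addrC. Qed.

Lemma symz_dbl (a b : V) : symz ds (a, b) = (symz s a, 0).
Proof. by congr pair; rewrite /= subrr. Qed.

Lemma dbrack_dbl_symzl (x y : V * V) : dbrack dl dr (symz ds x) y = 0.
Proof.
case: x y => [a b] [c d]; rewrite symz_dbl; congr pair;
  rewrite /= ?(linear0, linear0l, linear0r, oppr0, addr0, add0r).
- exact: dbrack_symzl.
- by rewrite s_symz subrr.
Qed.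

Lemma dbrack_dbl_symzr (x y : V * V) : dbrack dl dr x (symz ds y) = 0.
Proof.
case: x y => [a b] [c d]; rewrite symz_dbl; congr pair;
  rewrite /= ?(linear0, linear0l, linear0r, oppr0, addr0, add0r).
- exact: dbrack_symzr.
- by rewrite s_symz subrr.
Qed.

End Doubling.

Theorem lemma5p4 (K : fieldType) (V : lmodType K)
    (l r : V -> V -> V) (s : V -> V) :
  partially_symmetric l r s ->
  @partially_symmetric K (V * V)%type (dbl_l l r s) (dbl_r l r s) (dbl_s s).
Proof.
case=> [[[Bl Br Ls] [[l_lr r_lr sK] [s_l s_r]]] symzl symzr].
split; first by apply: dbl_zero_dialg_inv.
- by apply: dbrack_dbl_symzl.
- by apply: dbrack_dbl_symzr.
Qed.
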